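(* Let $n\ge 96$ and let $\mathcal{H}$ be an $n$-vertex Berge-$K_4$-saturated $3$-graph with the minimum number of hyperedges. Let $X=\{v\in V(\mathcal{H}): d_{\mathcal{H}}(v)\ge 3\}$, $A=\{v\in V(\mathcal{H})\setminus X: \text{every hyperedge containing } v \text{ intersects } X\}$ and $B=V(\mathcal{H})\setminus(X\cup A)$. Then $B=\emptyset$.
   Context: A $3$-graph has all hyperedges of size $3$. A $3$-graph contains a Berge-$K_4$ if there are $4$ distinct vertices and $6$ distinct hyperedges, one containing each of the $6$ pairs of these vertices. $\mathcal{H}$ is Berge-$K_4$-saturated if it contains no Berge-$K_4$ but adding any $3$-set of vertices not already a hyperedge creates a Berge-$K_4$. ''Minimum number of hyperedges'' means minimum among all Berge-$K_4$-saturated $3$-graphs on $n$ vertices. $d_{\mathcal{H}}(v)$ is the number of hyperedges containing $v$. *)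

From mathcomp Require Import all_boot.
Set Implicit Arguments. Unset Strict Implicit. Unset Printing Implicit Defensive.

Section Hyper.
Variable T : finType.

Definition three_graph (H : {set {set T}}) : Prop :=
  forall e, e \in H -> #|e| = 3.

Definition pairs_of (S : {set T}) : {set {set T}} :=
  [set p : {set T} | (p \subset S) && (#|p| == 2)].

(* H contains a Berge-K4: 4 distinct vertices (a 4-set S) and 6 distinct
   hyperedges f p, one containing each pair p of S *)
Definition has_berge_K4 (H : {set {set T}}) : Prop :=
  exists S : {set T}, #|S| = 4 /\
    exists f : {set T} -> {set T},
      {in pairs_of S &, injective f} /\
      (forall p, p \in pairs_of S -> p \subset f p /\ f p \in H).

Definition berge_K4_saturated (H : {set {set T}}) : Prop :=
  ~ has_berge_K4 H /\
  forall e : {set T}, #|e| = 3 -> e \notin H -> has_berge_K4 (e |: H).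

Definition deg (H : {set {set T}}) (v : T) : nat := #|[set e in H | v \in e]|.

Definition Xset (H : {set {set T}}) : {set T} := [set v | 3 <= deg H v].

Definition Aset (H : {set {set T}}) : {set T} :=
  [set v | (v \notin Xset H) &&
           [forall e in H, (v \in e) ==> [exists x in Xset H, x \in e]]].

Definition Bset (H : {set {set T}}) : {set T} := ~: (Xset H :|: Aset H).

End Hyper.

(* A vertex v of B lies in an edge e all of whose vertices have degree at most 2.
   As v has degree at most 2, some x outside e makes e' = {v, b, x} (b in e) a
   non-edge, so by saturation H + e' contains a Berge-K4. Vertices of the copy have
   degree at least 3, so the copy meets e only in {v, b}, where degrees are at most
   3; hence every edge through v or b is used by the copy, and the pair {v, b}
   would be sent both to e and to e'. *)

From mathcomp Require Import all_boot.

Set Implicit Arguments. Unset Strict Implicit. Unset Printing Implicit Defensive.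

Section BergeK4.
Variable T : finType.
Implicit Types (G H : {set {set T}}) (S e p : {set T}) (f : {set T} -> {set T}).

Definition berge_K4_on G S f : Prop :=
  [/\ #|S| = 4, {in pairs_of S &, injective f} &
      forall p, p \in pairs_of S -> p \subset f p /\ f p \in G].

Lemma has_berge_K4P G : has_berge_K4 G <-> exists S f, berge_K4_on G S f.
Proof.
split=> [[S [S4 [f [f_inj f_edge]]]] | [S [f [S4 f_inj f_edge]]]].
  by exists S, f.
by exists S; split=> //; exists f.
Qed.

Lemma pairs_ofP S p : reflect (p \subset S /\ #|p| = 2) (p \in pairs_of S).
Proof. by rewrite inE; apply: (iffP andP) => [[-> /eqP] | [-> ->]]. Qed.

Definition pairs_at S (v : T) : {set {set T}} := [set p in pairs_of S | v \in p].

Lemma pair_eq_setU2 p (a b : T) : #|p| = 2 -> p \subset [set a; b] -> p = [set a; b].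
Proof.
by move=> p2 pab; apply/eqP; rewrite eqEcard pab p2 cards2; case: (a != b).
Qed.

Lemma setU1_meet p (A : {set T}) (x : T) :
  1 < #|p| -> p \subset A :|: [set x] -> exists2 v, v \in p & v \in A.
Proof.
move=> p_gt1 pAx; have [/exists_inP[v] | /exists_inPn pA] := boolP [exists v in p, v \in A].
  by exists v.
suff /subset_leq_card : p \subset [set x] by rewrite cards1 leqNgt p_gt1.
by apply/subsetP => y yp; move: (subsetP pAx y yp); rewrite in_setU (negbTE (pA y yp)).
Qed.

Lemma card_pairs_at S v : #|S| = 4 -> v \in S -> #|pairs_at S v| = 3.
Proof.
move=> S4 vS.
have -> : pairs_at S v = [set [set v; s] | s in S :\ v].
  apply/setP => p; apply/idP/imsetP => [|[s]].
    move=> /setIdP[/pairs_ofP[pS p2] vp].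
    have /cards1P[s ps] : #|p :\ v| == 1 by move: p2; rewrite (cardsD1 v p) vp add1n => -[->].
    have sp : s \in p :\ v by rewrite ps set11.
    exists s; first by move: sp; rewrite !in_setD1 => /andP[-> /(subsetP pS) ->].
    by rewrite -ps setD1K.
  rewrite in_setD1 => /andP[sv sS] ->.
  by rewrite !inE eqxx andbT subUset !sub1set vS sS cards2 (eq_sym v) sv.
rewrite card_in_imset; first by move: S4; rewrite (cardsD1 v S) vS => -[].
move=> s t; rewrite !in_setD1 => /andP[sv _] /andP[tv _] st.
by move: (set22 v s); rewrite st in_set2 (negbTE sv) => /eqP.
Qed.

Lemma deg_setU1 H e v : deg (e |: H) v <= (v \in e) + deg H v.
Proof.
rewrite /deg; case: (boolP (v \in e)) => ve.
  apply: leq_trans (subset_leq_card (_ : _ \subset e |: [set g in H | v \in g])) _.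
    by apply/subsetP => g; rewrite !inE => /andP[/orP[-> | ->] ->]; rewrite ?orbT.
  by rewrite cardsU1; case: (_ \notin _).
apply: subset_leq_card; apply/subsetP => g; rewrite !inE => /andP[/orP[/eqP ge | ->] vg] //.
by move: ve; rewrite -ge vg.
Qed.

Section BergeCopy.
Variables (G : {set {set T}}) (S : {set T}) (f : {set T} -> {set T}).
Hypothesis copy : berge_K4_on G S f.

Lemma berge_edges_at_sub v : f @: pairs_at S v \subset [set g in G | v \in g].
Proof.
case: copy => _ _ f_edge; apply/subsetP => g /imsetP[p /setIdP[pS vp] ->].
by have [/subsetP pf fG] := f_edge p pS; rewrite inE fG pf.
Qed.

Lemma card_berge_edges_at v : v \in S -> #|f @: pairs_at S v| = 3.
Proof.
case: copy => S4 f_inj _ vS; rewrite -(card_pairs_at S4 vS) card_in_imset //.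
by move=> p q /setIdP[pS _] /setIdP[qS _]; apply: f_inj.
Qed.

Lemma berge_deg_ge3 v : v \in S -> 3 <= deg G v.
Proof.
by move=> vS; rewrite -(card_berge_edges_at vS) subset_leq_card ?berge_edges_at_sub.
Qed.

Lemma berge_edge_at v g : v \in S -> deg G v <= 3 -> g \in G -> v \in g ->
  exists2 p, p \in pairs_at S v & f p = g.
Proof.
move=> vS dv gG vg.
have edges_at : f @: pairs_at S v = [set g in G | v \in g].
  apply/eqP; rewrite eqEcard berge_edges_at_sub card_berge_edges_at //.
have : g \in f @: pairs_at S v by rewrite edges_at inE gG.
by case/imsetP=> p pv ->; exists p.
Qed.

End BergeCopy.

Lemma berge_K4_setU1_edge H e S f : ~ has_berge_K4 H ->
  berge_K4_on (e |: H) S f -> exists2 p, p \in pairs_of S & f p = e.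
Proof.
move=> noK [S4 f_inj f_edge].
case: (boolP [exists p in pairs_of S, f p == e]) => [/exists_inP[p pS /eqP] | /exists_inPn fe].
  by exists p.
case: noK; apply/has_berge_K4P; exists S, f; split=> // p pS.
have [pf] := f_edge p pS; rewrite in_setU1 => /orP[fpe | fH] //.
by move: (fe p pS); rewrite fpe.
Qed.

Lemma berge_K4_free_setU1 H e (a b x : T) :
  ~ has_berge_K4 H -> e \in H -> {in e, forall u, deg H u <= 2} ->
  a \in e -> b \in e -> x \notin e -> [set a; b; x] \notin H ->
  ~ has_berge_K4 ([set a; b; x] |: H).
Proof.
move=> noK eH e_low ae be xe e'H /has_berge_K4P[S [f copy]].
set e' := [set a; b; x] in e'H copy *.
have [p0 /[dup] p0S /pairs_ofP[p0_sub p02] fp0] := berge_K4_setU1_edge noK copy.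
case: (copy) => _ f_inj f_edge.
have ab_e u : u \in [set a; b] -> u \in e by rewrite in_set2 => /orP[] /eqP ->.
have small_deg u : u \in e -> deg (e' |: H) u <= (u \in e') + 2.
  by move=> ue; apply: leq_trans (deg_setU1 _ _ _) _; rewrite leq_add2l e_low.
have eS_ab u : u \in e -> u \in S -> u \in [set a; b].
  move=> ue uS; case: (boolP (u \in e')) => [| ue'].
    rewrite /e' in_setU in_set1 => /orP[// | /eqP ux].
    by move: xe; rewrite -ux ue.
  by have := leq_trans (berge_deg_ge3 copy uS) (small_deg u ue); rewrite (negbTE ue').
have edge_pair u (g : {set T}) : u \in e -> u \in S -> g \in e' |: H -> u \in g ->
    exists2 p, p \in pairs_at S u & f p = g.
  move=> ue uS gE ug; have du : deg (e' |: H) u <= 3.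
    by apply: leq_trans (small_deg u ue) _; case: (_ \in _).
  exact: (berge_edge_at copy uS du gE ug).
have [v vp0 vab] : exists2 v, v \in p0 & v \in [set a; b].
  apply: (setU1_meet (x := x)); first by rewrite p02.
  by have [pf _] := f_edge p0 p0S; rewrite fp0 in pf.
have vS : v \in S := subsetP p0_sub v vp0.
have [p /setIdP[pS _] fpe] := edge_pair v e (ab_e v vab) vS (setU1r _ eH) (ab_e v vab).
have [/pairs_ofP[p_sub p2] [pe _]] := (pS, f_edge p pS); rewrite fpe in pe.
have pab : p = [set a; b].
  apply: pair_eq_setU2 p2 _; apply/subsetP => u up.
  exact: eS_ab (subsetP pe u up) (subsetP p_sub u up).
have in_p0 u : u \in [set a; b] -> u \in p0.
  move=> uab; have uS : u \in S by rewrite (subsetP p_sub) // pab.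
  have ue' : u \in e' by rewrite /e' in_setU uab.
  have [q /setIdP[qS uq] fq] := edge_pair u e' (ab_e u uab) uS (setU11 _ _) ue'.
  by rewrite -(f_inj q p0 qS p0S) // fq fp0.
have pp0 : p = p0.
  apply/eqP; rewrite eqEcard p02 p2 leqnn andbT.
  by apply/subsetP => u; rewrite pab => /in_p0.
by case/negP: e'H; rewrite -fp0 -pp0 fpe.
Qed.

Lemma exists_non_edge H (U : {set T}) (a b : T) :
  a \notin U -> b \notin U -> deg H a < #|U| -> exists2 x, x \in U & [set a; b; x] \notin H.
Proof.
move=> aU bU dU.
have [/exists_inP[x] | /exists_inPn allx] := boolP [exists x in U, [set a; b; x] \notin H].
  by exists x.
suff : #|U| <= deg H a by rewrite leqNgt dU.
pose edge x := [set a; b; x].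
have <- : #|edge @: U| = #|U|.
  apply: card_in_imset => x y xU yU exy.
  have : x \in edge x by rewrite !inE eqxx orbT.
  rewrite exy !inE -orbA => /or3P[/eqP xa | /eqP xb | /eqP //].
    by move: xU; rewrite xa (negbTE aU).
  by move: xU; rewrite xb (negbTE bU).
apply: subset_leq_card; apply/subsetP => g /imsetP[x xU ->].
by move: (allx x xU); rewrite negbK inE => ->; rewrite !inE eqxx.
Qed.

Lemma Bset_edge H v : v \in Bset H ->
  exists e, [/\ e \in H, v \in e & {in e, forall u, deg H u <= 2}].
Proof.
rewrite !inE negb_or => /andP[vX]; rewrite vX /= => /forall_inPn[e eH].
rewrite negb_imply => /andP[ve /exists_inPn eX]; exists e; split=> // u ue.
by rewrite leqNgt; apply: contraL ue => du; apply: eX; rewrite inE.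
Qed.

End BergeK4.

Theorem lemma3p4 (n : nat) (H : {set {set 'I_n}}) :
  96 <= n ->
  three_graph H ->
  berge_K4_saturated H ->
  (forall H' : {set {set 'I_n}},
      three_graph H' -> berge_K4_saturated H' -> #|H| <= #|H'|) ->
  Bset H = set0.
Proof.
move=> n96 H3 [noK sat] _; apply/setP => v; rewrite in_set0.
apply/negbTE/negP => /Bset_edge[e [eH ve e_low]].
have e3 := H3 e eH.
have [b] : exists b, b \in e :\ v.
  by apply/set0Pn; rewrite -card_gt0; move: e3; rewrite (cardsD1 v e) ve add1n => -[->].
rewrite in_setD1 => /andP[bv be].
have deg_lt : deg H v < #|~: e|.
  rewrite cardsCs setCK card_ord e3; apply: leq_ltn_trans (e_low v ve) _.
  by rewrite ltn_subRL; apply: leq_trans n96.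
have [x] : exists2 x, x \in ~: e & [set v; b; x] \notin H.
  by apply: exists_non_edge deg_lt; rewrite inE negbK.
rewrite inE => xe e'H.
have e'3 : #|[set v; b; x]| = 3.
  have [vx bx] : v != x /\ b != x by split; apply: contraNneq xe => <-.
  by rewrite -setUA cardsU1 cards2 !inE negb_or (eq_sym v) bv vx bx.
exact: berge_K4_free_setU1 noK eH e_low ve be xe e'H (sat _ e'3 e'H).
Qed.
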